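(* Let $p$ be a prime, $G$ a finite abelian $p$-group, and $\varphi\colon A\to B$ an isomorphism between subgroups of $G$. Let $r\ge 1$ be an integer such that for every integer $s>r$ and every $g\in G$: $g\in H(G,\varphi)$ if and only if $\varphi^i(g)$ is defined for $i=0,\dots,s-1$. Fix an integer $s>r$. For $i\in\mathbb{Z}/s\mathbb{Z}$ let $G_i=G\times\{i\}$, $A_i=A\times\{i\}$, $B_i=B\times\{i\}$, and let $K=G_0*_{A_0=B_1}G_1*_{A_1=B_2}\cdots*_{A_{s-2}=B_{s-1}}G_{s-1}$, where $A_i=B_{i+1}$ identifies $a\times i$ with $\varphi(a)\times(i+1)$. Let $G'=H_1(K;\mathbb{Z})$; each natural map $G_j\to G'$ is injective, and we regard $A':=A_{s-1}$ and $B':=B_0$ as subgroups of $G'$. Let $\varphi'\colon A'\to B'$ be the isomorphism $\varphi'(a\times(s-1))=\varphi(a)\times 0$. Then: (1) $H(G',\varphi')=A'\cap B'$. (2) The isomorphism $\Psi\colon G\to G_0\le G'$, $\Psi(g)=g\times 0$, restricts to an isomorphism $H(G,\varphi)\to H(G',\varphi')$, and $\Psi\circ\varphi^s=\varphi'\circ\Psi$ on $H(G,\varphi)$.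
   Context: For a group $Q$ and an isomorphism $\psi\colon A''\to B''$ between subgroups of $Q$, the core $H(Q,\psi)$ is $\bigcap_k H_k$ where $H_0=A''\cap B''$ and $H_{k+1}=\psi^{-1}(H_k)\cap H_k\cap\psi(H_k)$ (with $\psi^{-1}(H_k)=\{a\in A'':\psi(a)\in H_k\}$); $\psi$ restricts to an automorphism of $H(Q,\psi)$. ''$\varphi^i(g)$ is defined'' means $g$ lies in the domain of the $i$-fold composite of $\varphi$ regarded as a partial map $G\to G$. *)

From HB Require Import structures.
From mathcomp Require Import all_boot all_fingroup all_solvable.
Set Implicit Arguments. Unset Strict Implicit. Unset Printing Implicit Defensive.
Local Open Scope group_scope.

Section Core.
Variable T : finGroupType.

Fixpoint coreH (A B : {set T}) (psi : T -> T) (k : nat) : {set T} :=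
  match k with
  | 0 => A :&: B
  | k.+1 => let Hk := coreH A B psi k in
            [set a in A | psi a \in Hk] :&: Hk :&: (psi @: Hk)
  end.

Definition in_core (A B : {set T}) (psi : T -> T) (x : T) : Prop :=
  forall k, x \in coreH A B psi k.

(* "psi^i(g) is defined" for psi regarded as a partial map with domain A *)
Fixpoint iter_defined (A : {set T}) (psi : T -> T) (i : nat) (g : T) : bool :=
  match i with
  | 0 => true
  | i.+1 => (g \in A) && iter_defined A psi i (psi g)
  end.
End Core.

Section Construction.
Variables (gT : finGroupType) (s : nat).

(* the direct product of s copies of gT, indexed by Z/sZ = 'I_s *)
Definition powT := {dffun forall i : 'I_s, gT}.

Definition delta (j : nat) (g : gT) : powT :=
  [ffun i : 'I_s => if val i == j then g else 1].

Variables (A : {set gT}) (phi : gT -> gT).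

Definition amal_rels : {set powT} :=
  \bigcup_(i < s.-1) [set delta i a * (delta i.+1 (phi a))^-1 | a in A].

Definition amal_rel_group : {group powT} := <<amal_rels>>%G.

(* G' = H_1(K; Z), the abelianization of the chain of amalgamated products,
   i.e. (G_0 x ... x G_{s-1}) / <relations> *)
Definition Gprime (G : {set gT}) : {set coset_of amal_rel_group} :=
  coset amal_rel_group @* setXn (fun _ : 'I_s => G).

Definition iota (j : nat) (g : gT) : coset_of amal_rel_group :=
  coset amal_rel_group (delta j g).

Definition Psi (g : gT) := iota 0 g.

Definition Aprime : {set coset_of amal_rel_group} := iota s.-1 @: A.
Definition Bprime (B : {set gT}) : {set coset_of amal_rel_group} := iota 0 @: B.

(* phi'(a x (s-1)) = phi(a) x 0 ; value irrelevant outside A' *)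
Definition phiprime (x : coset_of amal_rel_group) : coset_of amal_rel_group :=
  match [pick a in A | iota s.-1 a == x] with
  | Some a => iota 0 (phi a)
  | None => 1
  end.
End Construction.

From Pilot Require Import Defs.
From HB Require Import structures.
From mathcomp Require Import all_boot all_fingroup all_solvable.
Set Implicit Arguments. Unset Strict Implicit. Unset Printing Implicit Defensive.
Local Open Scope group_scope.

(* Pushing an element of the relation subgroup along the chain of factors, each
   step through phi, is legal and leaves nothing in the last factor; abelianness
   makes this pushing multiplicative.  Hence a x (s-1) = b x 0 in G' exactly when
   phi^(s-1) b is defined and equals a.  By the hypothesis on r, H(G, phi) is the
   set of g for which phi^(s-1) g is defined, so A' :&: B' = Psi(H(G, phi)) and
   phi' acts on it as Psi phi^s Psi^-1.  Being an injective self-map of a finite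
   set, phi' permutes A' :&: B', which is therefore its own core. *)

Section Iterates.
Variables (gT : finGroupType) (A : {group gT}) (phi : {morphism A >-> gT}).

Lemma iter_definedD k i g :
  iter_defined A phi (k + i) g =
  iter_defined A phi k g && iter_defined A phi i (iter k phi g).
Proof. by elim: k g => //= k IH g; rewrite IH -iterSr andbA. Qed.

Lemma iter_definedSr k g :
  iter_defined A phi k.+1 g = iter_defined A phi k g && (iter k phi g \in A).
Proof. by rewrite -addn1 iter_definedD /= andbT. Qed.

Lemma iter_defined_mono i j g :
  (i <= j)%N -> iter_defined A phi j g -> iter_defined A phi i g.
Proof. by move/subnKC <-; rewrite iter_definedD => /andP[]. Qed.

Lemma iter_morph1 k : iter k phi 1 = 1.
Proof. by elim: k => //= k ->; rewrite morph1. Qed.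

Lemma iter_defined1 k : iter_defined A phi k 1.
Proof. by elim: k => //= k IH; rewrite group1 morph1 IH. Qed.

Lemma iter_injm k x y : 'injm phi ->
  iter_defined A phi k x -> iter_defined A phi k y ->
  iter k phi x = iter k phi y -> x = y.
Proof.
move=> injphi; elim: k x y => // k IH x y /andP[xA dx] /andP[yA dy].
by rewrite !iterSr => /(IH _ _ dx dy); apply: (injmP injphi).
Qed.

Lemma iter_mem (G : {group gT}) k g : phi @* A \subset G ->
  g \in G -> iter_defined A phi k g -> iter k phi g \in G.
Proof.
case: k => // k sphiG gG; rewrite iter_definedSr => /andP[_ itA] /=.
exact/(subsetP sphiG)/mem_morphim.
Qed.
End Iterates.

Lemma imset_in_self (T : finType) (f : T -> T) (H : {set T}) :
  {in H, forall x, f x \in H} -> {in H &, injective f} -> f @: H = H.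
Proof.
move=> fH injf; apply/eqP; rewrite eqEcard (card_in_imset injf) leqnn andbT.
by apply/subsetP=> _ /imsetP[x xH ->]; apply: fH.
Qed.

Lemma coreH_stable (T : finGroupType) (A B : {set T}) (psi : T -> T) :
  {in A :&: B, forall x, psi x \in A :&: B} -> {in A :&: B &, injective psi} ->
  forall k, coreH A B psi k = A :&: B.
Proof.
move=> psiH injpsi; elim=> //= k ->; rewrite imset_in_self // -setIA setIid.
apply/setIidPr/subsetP=> x xH; rewrite inE psiH //.
by case/setIP: xH => ->.
Qed.

Section Delta.
Variables (gT : finGroupType) (s j : nat).

Lemma deltaM (x y : gT) : delta s j (x * y) = delta s j x * delta s j y.
Proof. by apply/ffunP=> i; rewrite mulg_ffun !ffunE; case: ifP; rewrite ?mulg1. Qed.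

Lemma delta1 : delta s j (1 : gT) = 1.
Proof. by apply/ffunP=> i; rewrite oneg_ffun ffunE; case: ifP. Qed.

Lemma delta_inord i (g : gT) : (i <= s)%N ->
  delta s.+1 j g (inord i) = if i == j then g else 1.
Proof. by move=> lei; rewrite ffunE /= inordK. Qed.
End Delta.

Section Amalgam.
Variables (gT : finGroupType) (G A : {group gT}) (phi : {morphism A >-> gT}).
Variable n : nat.
Hypotheses (cGG : abelian G) (sAG : A \subset G) (sphiG : phi @* A \subset G).

Local Notation powG := (setXn (fun _ : 'I_n.+2 => G)).
Local Notation N := (amal_rel_group n.+2 A phi).
Local Notation iota := (Defs.iota n.+2 A phi).

Lemma phi_mem a : a \in A -> phi a \in G.
Proof. by move=> aA; apply/(subsetP sphiG)/mem_morphim. Qed.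

Lemma abelian_powG : abelian powG.
Proof.
apply/centsP=> x /setXnP xG y /setXnP yG; apply/ffunP=> i.
by rewrite !mulg_ffun; apply: (centsP cGG).
Qed.

Lemma delta_powG j g : g \in G -> delta n.+2 j g \in powG.
Proof. by move=> gG; apply/setXnP=> i; rewrite ffunE; case: ifP. Qed.

(* [chain x i] pushes x_0, ..., x_i successively into the i-th factor through
   the identifications a x k = phi a x (k + 1); relations, hence all of N,
   push through legally and leave nothing in the last factor. *)
Fixpoint chain (x : powT gT n.+2) (i : nat) : gT :=
  if i is i'.+1 then x (inord i) * phi (chain x i') else x (inord 0).

Definition chain_kernel : {set powT gT n.+2} :=
  [set x in powG | [forall i : 'I_n.+1, chain x i \in A] && (chain x n.+1 == 1)].

Lemma chain1 i : chain 1 i = 1.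
Proof. by elim: i => /= [|i ->]; rewrite oneg_ffun ?morph1 ?mulg1. Qed.

Lemma chainM x y i : x \in powG -> y \in powG ->
  (forall j, (j < i)%N -> chain x j \in A) -> (forall j, (j < i)%N -> chain y j \in A) ->
  chain (x * y) i = chain x i * chain y i.
Proof.
move=> /setXnP xG /setXnP yG; elim: i => [|i IH] xA yA /=; first exact: mulg_ffun.
rewrite IH => [|j /ltnW/xA|j /ltnW/yA] //.
rewrite mulg_ffun morphM ?xA ?yA // -!mulgA; congr (_ * _); rewrite !mulgA.
by congr (_ * _); apply: (centsP cGG); rewrite ?yG ?phi_mem ?xA.
Qed.

Lemma group_set_chain_kernel : group_set chain_kernel.
Proof.
apply/group_setP; split.
  by rewrite inE group1 chain1 eqxx andbT; apply/forallP=> i; rewrite chain1.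
move=> x y /setIdP[xG /andP[/forallP xA /eqP x1]] /setIdP[yG /andP[/forallP yA /eqP y1]].
have xA' j : (j < n.+1)%N -> chain x j \in A by move=> ltj; apply: (xA (Ordinal ltj)).
have yA' j : (j < n.+1)%N -> chain y j \in A by move=> ltj; apply: (yA (Ordinal ltj)).
rewrite inE groupM // chainM // x1 y1 mulg1 eqxx andbT.
apply/forallP=> i; have lti := ltn_ord i.
rewrite chainM // => [|j ltji|j ltji]; first by rewrite groupM.
  by apply: xA'; apply: ltn_trans ltji lti.
by apply: yA'; apply: ltn_trans ltji lti.
Qed.
Canonical chain_kernel_group := Group group_set_chain_kernel.

Lemma amal_rel_mem i a : (i < n.+1)%N -> a \in A ->
  delta n.+2 i a * (delta n.+2 i.+1 (phi a))^-1 \in N.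
Proof.
move=> lti aA; apply/mem_gen/bigcupP; exists (Ordinal lti) => //.
exact: imset_f.
Qed.

Lemma amal_rel_chain_kernel i a : (i < n.+1)%N -> a \in A ->
  delta n.+2 i a * (delta n.+2 i.+1 (phi a))^-1 \in chain_kernel.
Proof.
move=> lti aA; set x := _ * _.
have xj j : (j <= n.+1)%N ->
    x (inord j) = (if j == i then a else 1) * (if j == i.+1 then phi a else 1)^-1.
  by move=> lej; rewrite mulg_ffun invg_ffun !delta_inord.
have chain_x j : (j <= n.+1)%N -> chain x j = if j == i then a else 1.
  elim: j => [|j IH] lej /=; first by rewrite xj // invg1 mulg1.
  rewrite xj // IH 1?ltnW // eqSS; case: (eqVneq j i) => [->|_].
    by rewrite (gtn_eqF (ltnSn i)) mul1g mulVg.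
  by rewrite invg1 mulg1 morph1 mulg1.
rewrite inE groupM ?groupV ?delta_powG ?phi_mem ?(subsetP sAG) //.
rewrite chain_x // (gtn_eqF lti) eqxx andbT.
by apply/forallP=> j; rewrite chain_x 1?ltnW //; case: ifP.
Qed.

Lemma amal_rel_sub_chain_kernel : N \subset chain_kernel.
Proof.
rewrite gen_subG; apply/bigcupsP=> i _; apply/subsetP=> _ /imsetP[a aA ->].
exact: amal_rel_chain_kernel.
Qed.

Lemma delta_norm j g : g \in G -> delta n.+2 j g \in 'N(N).
Proof.
move=> gG; apply: subsetP (delta_powG j gG).
apply: sub_abelian_norm abelian_powG _.
by apply: subset_trans amal_rel_sub_chain_kernel _; apply/subsetP=> x /setIdP[].
Qed.

Lemma iota_eqP j k x y : x \in G -> y \in G ->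
  reflect (iota j x = iota k y) (delta n.+2 j x * (delta n.+2 k y)^-1 \in N).
Proof.
by move=> xG yG; rewrite -mem_rcoset; apply: rcoset_kercosetP; apply: delta_norm.
Qed.

Lemma iotaM j : {in G &, {morph iota j : x y / x * y}}.
Proof. by move=> x y xG yG; rewrite /Defs.iota deltaM coset_morphM ?delta_norm. Qed.

Lemma iota1 j : iota j 1 = 1.
Proof. by rewrite /Defs.iota delta1 coset_id. Qed.

Lemma chain_last_first a b j : (j <= n)%N -> iter_defined A phi j b ->
  chain (delta n.+2 n.+1 a * (delta n.+2 0 b)^-1) j = (iter j phi b)^-1.
Proof.
elim: j => [|j IH] lejn.
  by rewrite /= mulg_ffun invg_ffun !delta_inord // mul1g.
rewrite iter_definedSr => /andP[dj itA] /=.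
rewrite IH 1?ltnW // mulg_ffun invg_ffun !delta_inord 1?ltnW //.
by rewrite eqSS (ltn_eqF lejn) invg1 mulg1 mul1g morphV.
Qed.

Lemma chain_kernel_last_first a b :
  delta n.+2 n.+1 a * (delta n.+2 0 b)^-1 \in chain_kernel ->
  iter_defined A phi n.+1 b /\ a = iter n.+1 phi b.
Proof.
case/setIdP=> _ /andP[/forallP xA /eqP x1]; set x := _ * _ in xA x1.
have defb j : (j <= n.+1)%N -> iter_defined A phi j b.
  elim: j => // j IH ltjn; have dj := IH (ltnW ltjn).
  rewrite iter_definedSr dj -groupV -(chain_last_first a) //.
  exact: (xA (Ordinal ltjn)).
have defbn := defb n.+1 (leqnn _); split=> //.
move: x1 => /=; rewrite chain_last_first ?(iter_defined_mono (leqnSn n)) //.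
rewrite mulg_ffun invg_ffun !delta_inord // eqxx invg1 mulg1.
rewrite morphV; last by move: defbn; rewrite iter_definedSr => /andP[].
exact: divg1_eq.
Qed.

Lemma delta_first_iter_mem k b : (k <= n.+1)%N -> iter_defined A phi k b ->
  delta n.+2 0 b * (delta n.+2 k (iter k phi b))^-1 \in N.
Proof.
elim: k => [|k IH] lekn; first by rewrite mulgV group1.
rewrite iter_definedSr => /andP[dk itA].
have := groupM (IH (ltnW lekn) dk) (amal_rel_mem lekn itA).
by rewrite -mulgA mulKg.
Qed.

Lemma iota_last_firstP a b : a \in G -> b \in G ->
  iota n.+1 a = iota 0 b <-> iter_defined A phi n.+1 b /\ a = iter n.+1 phi b.
Proof.
move=> aG bG; split=> [/(iota_eqP _ _ aG bG) aNb|[db ->]].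
  exact/chain_kernel_last_first/(subsetP amal_rel_sub_chain_kernel).
have itG := iter_mem sphiG bG db.
by apply/esym/(iota_eqP _ _ bG itG); apply: delta_first_iter_mem.
Qed.

Lemma iota_eq_div j x y : x \in G -> y \in G ->
  iota j x = iota j y -> iota j (x * y^-1) = 1.
Proof. by move=> xG yG exy; rewrite iotaM ?groupV // exy -iotaM ?groupV // mulgV iota1. Qed.

Lemma iota_inj_first : 'injm phi -> {in G &, injective (iota 0)}.
Proof.
move=> injphi x y xG yG /(iota_eq_div xG yG); rewrite -(iota1 n.+1) => /esym.
have xyG : x * y^-1 \in G by rewrite groupM ?groupV.
case/iota_last_firstP=> // dxy; rewrite -(iter_morph1 phi n.+1) => e1.
by apply/divg1_eq/(iter_injm injphi dxy (iter_defined1 _ _)).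
Qed.

Lemma iota_inj_last : {in G &, injective (iota n.+1)}.
Proof.
move=> x y xG yG /(iota_eq_div xG yG); rewrite -(iota1 0).
have xyG : x * y^-1 \in G by rewrite groupM ?groupV.
by case/iota_last_firstP=> // _; rewrite iter_morph1 => /divg1_eq.
Qed.

Lemma phiprime_iota a : a \in A -> phiprime (iota n.+1 a) = iota 0 (phi a).
Proof.
move=> aA; rewrite /phiprime; case: pickP => [a' /andP[a'A /eqP e]|/(_ a)].
  by rewrite (iota_inj_last (subsetP sAG _ a'A) (subsetP sAG _ aA) e).
by rewrite aA eqxx.
Qed.
End Amalgam.

Section Core.
Variables (gT : finGroupType) (G A B : {group gT}) (phi : {morphism A >-> gT}).
Variables (n r : nat).
Hypotheses (cGG : abelian G) (sAG : A \subset G) (sBG : B \subset G).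
Hypotheses (sphiG : phi @* A \subset G) (injphi : 'injm phi).
Hypothesis core_iter_defined : forall s' : nat, (r < s')%N -> forall g, g \in G ->
  (in_core A B phi g <-> (forall i, (i < s')%N -> iter_defined A phi i g)).
Hypothesis ltrn : (r < n.+2)%N.

Local Notation iota := (Defs.iota n.+2 A phi).
Local Notation Ap := (Aprime n.+2 A phi).
Local Notation Bp := (Bprime n.+2 A phi B).
Local Notation in_core := (in_core A B phi).

Lemma in_core_mem g : in_core g -> g \in A :&: B.
Proof. by move/(_ 0%N). Qed.

Lemma in_core_G g : in_core g -> g \in G.
Proof. by case/in_core_mem/setIP=> /(subsetP sAG). Qed.

Lemma in_core_iter_defined k g : in_core g -> iter_defined A phi k g.
Proof.
move=> cg; have ltr : (r < (maxn r k).+1)%N by rewrite ltnS leq_maxl.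
by apply: (core_iter_defined ltr (in_core_G cg)).1; rewrite ?ltnS ?leq_maxr.
Qed.

Lemma in_coreP g : g \in G -> in_core g <-> iter_defined A phi n.+1 g.
Proof.
move=> gG; split; first exact: in_core_iter_defined.
by move=> dg; apply/(core_iter_defined ltrn gG) => i lti; apply: iter_defined_mono dg.
Qed.

Lemma in_core_iter k g : in_core g -> in_core (iter k phi g).
Proof.
move=> cg; have := in_core_iter_defined (k + n.+1) cg.
rewrite iter_definedD => /andP[dk dn].
by apply/in_coreP=> //; apply: iter_mem sphiG (in_core_G cg) dk.
Qed.

Lemma iota_first_iter_last g : in_core g -> iota 0 g = iota n.+1 (iter n.+1 phi g).
Proof.
move=> cg; have itG := in_core_G (in_core_iter n.+1 cg).
apply/esym/(iota_last_firstP n cGG sAG sphiG itG (in_core_G cg)).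
by rewrite in_core_iter_defined.
Qed.

Lemma iota_first_ApBp g : in_core g -> iota 0 g \in Ap :&: Bp.
Proof.
move=> cg; case/setIP: (in_core_mem cg) => _ gB.
rewrite inE imset_f // iota_first_iter_last // imset_f //.
by case/setIP: (in_core_mem (in_core_iter n.+1 cg)).
Qed.

Lemma ApBp_iota_first x : x \in Ap :&: Bp -> exists2 g, in_core g & x = iota 0 g.
Proof.
case/setIP=> /imsetP[a aA ->] /imsetP[b bB e]; exists b => //.
have [aG bG] := (subsetP sAG a aA, subsetP sBG b bB).
by apply/in_coreP => //; case/(iota_last_firstP n cGG sAG sphiG aG bG): e.
Qed.

Lemma phiprime_iota_first g : in_core g -> phiprime (iota 0 g) = iota 0 (iter n.+2 phi g).
Proof.
move=> cg; rewrite iota_first_iter_last // (phiprime_iota n cGG sAG sphiG) //.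
by case/setIP: (in_core_mem (in_core_iter n.+1 cg)).
Qed.

Lemma coreH_ApBp k : coreH Ap Bp (@phiprime gT n.+2 A phi) k = Ap :&: Bp.
Proof.
apply: coreH_stable => [_ /ApBp_iota_first[g cg ->]|].
  by rewrite phiprime_iota_first //; apply/iota_first_ApBp/in_core_iter.
move=> _ _ /ApBp_iota_first[g cg ->] /ApBp_iota_first[h ch ->].
rewrite !phiprime_iota_first // => e; congr (iota 0 _).
have [itgG ithG] := (in_core_G (in_core_iter n.+2 cg), in_core_G (in_core_iter n.+2 ch)).
apply: (iter_injm injphi _ _ (iota_inj_first cGG sAG sphiG injphi itgG ithG e));
  exact: in_core_iter_defined.
Qed.
End Core.

Theorem lemma5p8 (gT : finGroupType) (p : nat) (G A B : {group gT})
    (phi : {morphism A >-> gT}) (r s : nat) :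
  prime p -> abelian G -> p.-group G ->
  A \subset G -> B \subset G -> 'injm phi -> phi @* A = B ->
  (1 <= r)%N ->
  (forall s' : nat, (r < s')%N -> forall g, g \in G ->
     (in_core A B phi g <-> (forall i, (i < s')%N -> iter_defined A phi i g))) ->
  (r < s)%N ->
  let Ap := Aprime s A phi in
  let Bp := Bprime s A phi B in
  let phip := @phiprime gT s A phi in
  let Ps := Psi s A phi in
  (forall x, in_core Ap Bp phip x <-> x \in Ap :&: Bp) /\
  ({in G &, injective Ps} /\ {in G &, {morph Ps : x y / x * y}} /\
   (forall g, in_core A B phi g -> in_core Ap Bp phip (Ps g)) /\
   (forall y, in_core Ap Bp phip y -> exists g, in_core A B phi g /\ Ps g = y) /\
   (forall h, in_core A B phi h -> Ps (iter s phi h) = phip (Ps h))).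
Proof.
move=> _ cGG _ sAG sBG injphi phiAB ler1 core_iter_defined.
have sphiG : phi @* A \subset G by rewrite phiAB.
case: s => [|[|n]] ltrs //; first by rewrite ltnNge ler1 in ltrs.
move=> Ap Bp phip Ps.
have Psi_core := iota_first_ApBp cGG sAG sphiG core_iter_defined ltrs.
have core_Psi := ApBp_iota_first cGG sAG sBG sphiG core_iter_defined ltrs.
have core_prime x : in_core Ap Bp phip x <-> x \in Ap :&: Bp.
  split=> [/(_ 0%N) //|xApBp k].
  by rewrite (coreH_ApBp cGG sAG sBG sphiG injphi core_iter_defined ltrs).
split=> //; split; first exact: iota_inj_first.
split; first exact: iotaM.
split=> [g /Psi_core/core_prime //|].
split=> [y /core_prime/core_Psi[g cg ->]|g cg]; first by exists g.
exact/esym/(phiprime_iota_first cGG sAG sphiG core_iter_defined ltrs).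
Qed.
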